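(* Let $D\ge 1$ be an integer and let $Q_D$ be the $D$-dimensional hypercube with vertex set $X=\{0,1\}^D$ and adjacency matrix $A$. The matrices $I,\alpha_1,\alpha_2,\ldots,\alpha_D$ form a basis for the space of symmetric $A$-like matrices of $Q_D$. In particular, this space has dimension $D+1$.
   Context: $Q_D$ is the graph with vertex set $X=\{0,1\}^D$ (sequences $x=(x_1,\ldots,x_D)$ with $x_i\in\{0,1\}$), two vertices being adjacent iff they differ in exactly one coordinate. $\mathrm{Mat}_X(\mathbb{R})$ denotes the real matrices with rows and columns indexed by $X$; $A$ is the adjacency matrix of $Q_D$ and $I$ the identity. A matrix $B\in\mathrm{Mat}_X(\mathbb{R})$ is called $A$-like if (i) $BA=AB$ and (ii) $B_{xy}=0$ for all $x,y\in X$ that are neither equal nor adjacent. For $1\le i\le D$, two vertices are $i$-adjacent if they differ in the $i$-th coordinate and agree in all others, and $\alpha_i\in\mathrm{Mat}_X(\mathbb{R})$ has $(x,y)$-entry $1$ if $x,y$ are $i$-adjacent and $0$ otherwise. *)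

From HB Require Import structures.
From mathcomp Require Import all_boot all_order all_algebra.
Set Implicit Arguments. Unset Strict Implicit. Unset Printing Implicit Defensive.
Import Order.TTheory GRing.Theory Num.Theory.
Local Open Scope ring_scope.

Definition cube (D : nat) : finType := {ffun 'I_D -> bool}.

(* Mat_X(R): square matrices whose rows/columns are indexed by X, via the
   canonical enumeration of the finite type X (enum_rank / enum_val). *)
Definition matX (R : nzRingType) (D : nat) := 'M[R]_#|cube D|.

Definition entry (R : nzRingType) (D : nat) (B : matX R D) (x y : cube D) : R :=
  B (enum_rank x) (enum_rank y).

Definition matX_of (R : nzRingType) (D : nat) (f : cube D -> cube D -> R) : matX R D :=
  \matrix_(a, b) f (enum_val a) (enum_val b).

Definition adjacent (D : nat) (x y : cube D) : bool :=
  #|[set i : 'I_D | x i != y i]| == 1%N.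

Definition iadjacent (D : nat) (i : 'I_D) (x y : cube D) : bool :=
  (x i != y i) && [forall j : 'I_D, (j != i) ==> (x j == y j)].

Definition adjA (R : nzRingType) (D : nat) : matX R D :=
  matX_of (fun x y => (adjacent x y)%:R).

Definition alpha (R : nzRingType) (D : nat) (i : 'I_D) : matX R D :=
  matX_of (fun x y => (iadjacent i x y)%:R).

Definition A_like (R : nzRingType) (D : nat) (B : matX R D) : bool :=
  (B *m adjA R D == adjA R D *m B) &&
  [forall x : cube D, forall y : cube D,
     ((x != y) && ~~ adjacent x y) ==> (entry B x y == 0)].

(* Symmetry uses MathComp's own qualifier [symmetricmx] (B \is symmetricmx <-> B = B^T). *)

(* The family I, alpha_1, ..., alpha_D, indexed by 'I_D.+1 (index 0 is I). *)
Definition cube_family_fun (R : nzRingType) (D : nat) (k : 'I_D.+1) : matX R D :=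
  match unlift ord0 k with
  | Some i => @alpha R D i
  | None => 1%:M
  end.

Definition cube_family (R : nzRingType) (D : nat) : (D.+1).-tuple (matX R D) :=
  [tuple @cube_family_fun R D k | k < D.+1].

From HB Require Import structures.
From mathcomp Require Import all_boot all_order all_algebra.
From mathcomp Require Import ring.
Set Implicit Arguments. Unset Strict Implicit. Unset Printing Implicit Defensive.
Import Order.TTheory GRing.Theory Num.Theory.
Local Open Scope ring_scope.

(* Write x + e_i for [flip x i].  Since A = alpha_1 + ... + alpha_D and the
   alpha_i come from the commuting involutions x |-> x + e_i, every combination
   c I + \sum_i c_i alpha_i is symmetric and A-like, and its entries at (x, x)
   and (x, x + e_i) are c and c_i: this gives independence and one inclusion.
   Conversely, for B symmetric and A-like the (x, y) entries of BA = AB read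
   \sum_i B(x, y + e_i) = \sum_i B(x + e_i, y).  Only the terms at distance at
   most one survive (vertices at even distance are never adjacent), so taking
   y = x + e_k gives B(x, x) = B(x + e_k, x + e_k), and taking y = x + e_i + e_j
   relates the edge weights around a square.  Comparing that relation at x and
   at x + e_k shows that 2 B(x + e_k, x + e_k + e_i) = 2 B(x, x + e_i).  As Q_D is
   connected, B = B(x, x) I + \sum_i B(x, x + e_i) alpha_i. *)

Section Hypercube.
Variable D : nat.
Implicit Types (x y : cube D) (i j k l : 'I_D).

Definition flip x i : cube D := [ffun j => (j == i) (+) x j].

Lemma flipE x i j : flip x i j = (j == i) (+) x j.
Proof. by rewrite ffunE. Qed.

Lemma flipK i : involutive (flip^~ i).
Proof. by move=> x; apply/ffunP => j; rewrite !flipE addbA addbb. Qed.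

Lemma flipC x i j : flip (flip x i) j = flip (flip x j) i.
Proof. by apply/ffunP => l; rewrite !flipE addbCA. Qed.

Lemma flip_inj x : injective (flip x).
Proof.
by move=> i j /ffunP/(_ i); rewrite !flipE eqxx => /addIb/esym/eqP.
Qed.

Lemma flip_neq x i : flip x i != x.
Proof. by apply/eqP => /ffunP/(_ i); rewrite flipE eqxx; case: (x i). Qed.

Lemma flip2_neq x i j : i != j -> flip (flip x i) j != x.
Proof.
move=> ij; apply/eqP => /ffunP/(_ i).
by rewrite !flipE eqxx (negbTE ij); case: (x i).
Qed.

Definition parity x := \big[addb/false]_j x j.

Lemma parity_flip x i : parity (flip x i) = ~~ parity x.
Proof.
rewrite /parity (bigD1 i) // [in RHS](bigD1 i) //= flipE eqxx addTb addNb.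
by congr (~~ (_ (+) _)); apply: eq_bigr => j /negbTE ji; rewrite flipE ji.
Qed.

Lemma flip2_neq_flip x i j k : flip (flip x i) j != flip x k.
Proof.
by apply/eqP => /(congr1 parity); rewrite !parity_flip negbK; case: (parity x).
Qed.

Lemma flip2_neq_flip2 x i j k l :
  i != j -> k != i -> k != j -> flip (flip x k) l != flip (flip x i) j.
Proof.
move=> ij ki kj; apply/eqP => E.
have lk : l = k.
  move/ffunP/(_ k): E; rewrite !flipE eqxx (negbTE ki) (negbTE kj).
  by case: eqP => // _; case: (x k).
move/ffunP/(_ i): E; rewrite lk flipK !flipE eqxx (negbTE ij).
by case: (x i).
Qed.

Lemma diff_set1E x y i : ([set j | x j != y j] == [set i]) = (y == flip x i).
Proof.
apply/eqP/eqP => [/setP E | ->].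
  apply/ffunP => j; move: (E j); rewrite !inE flipE.
  by case: (j == i); case: (x j); case: (y j).
by apply/setP => j; rewrite !inE flipE; case: (j == i); case: (x j).
Qed.

Lemma adjacentP x y : reflect (exists i, y = flip x i) (adjacent x y).
Proof.
apply: (iffP cards1P) => -[i /eqP E]; exists i; apply/eqP.
  by rewrite -diff_set1E E.
by rewrite diff_set1E.
Qed.

Lemma iadjacentE i x y : iadjacent i x y = (y == flip x i).
Proof.
apply/andP/eqP => [[xy /forallP xyj] | ->].
  apply/ffunP => j; rewrite flipE; case: (eqVneq j i) => [-> | ji].
    by move: xy; case: (x i); case: (y i).
  by move: (xyj j); rewrite ji => /eqP.
split; first by rewrite flipE eqxx; case: (x i).
by apply/forallP => j; apply/implyP => ji; rewrite flipE (negbTE ji).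
Qed.

Lemma flip_invariant_const (T : Type) (f : cube D -> T) :
  (forall x i, f (flip x i) = f x) -> forall x y, f x = f y.
Proof.
move=> fI; suff f_0 x : f x = f [ffun => false] by move=> x y; rewrite !f_0.
have [s supp_s] : exists s : seq 'I_D, forall j, x j -> j \in s.
  by exists (enum 'I_D) => j; rewrite mem_enum.
elim: s x supp_s => [|i s IHs] x supp_x.
  by congr f; apply/ffunP => j; rewrite ffunE; apply/negbTE/negP => /supp_x.
have notin_s j : j != i -> j \in i :: s -> j \in s by rewrite inE => /negbTE ->.
have [xi | /negbTE xi] := boolP (x i).
  rewrite -(fI x i); apply: IHs => j; rewrite flipE.
  by case: (eqVneq j i) => [-> | ji]; rewrite ?eqxx ?xi // => /supp_x; apply: notin_s.
apply: IHs => j; case: (eqVneq j i) => [-> | ji]; first by rewrite xi.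
by move/supp_x; apply: notin_s.
Qed.

End Hypercube.

Section CubeMatrices.
Variables (R : comNzRingType) (D : nat).
Local Notation M := (matX R D).
Implicit Types (B C : M) (x y : cube D) (i j : 'I_D).

Lemma matX_ext B C : (forall x y, entry B x y = entry C x y) -> B = C.
Proof.
move=> BC; apply/matrixP => a b.
by have := BC (enum_val a) (enum_val b); rewrite /entry !enum_valK.
Qed.

Lemma entry_matX_of (f : cube D -> cube D -> R) x y : entry (matX_of f) x y = f x y.
Proof. by rewrite /entry mxE !enum_rankK. Qed.

Lemma entryD B C x y : entry (B + C) x y = entry B x y + entry C x y.
Proof. by rewrite /entry mxE. Qed.

Lemma entryZ a B x y : entry (a *: B) x y = a * entry B x y.
Proof. by rewrite /entry mxE. Qed.

Lemma entry_sum I (r : seq I) (P : pred I) (F : I -> M) x y :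
  entry (\sum_(k <- r | P k) F k) x y = \sum_(k <- r | P k) entry (F k) x y.
Proof. by rewrite /entry summxE. Qed.

Lemma entry0 x y : entry (0 : M) x y = 0.
Proof. by rewrite /entry mxE. Qed.

Lemma entry_scalar_mx a x y : entry (a%:M : M) x y = a *+ (x == y).
Proof. by rewrite /entry mxE (inj_eq enum_rank_inj). Qed.

Lemma entry_mulmx B C x y : entry (B *m C) x y = \sum_z entry B x z * entry C z y.
Proof. by rewrite /entry mxE (reindex enum_rank) //; apply/onW_bij/enum_rank_bij. Qed.

Lemma entry_alpha i x y : entry (alpha R i) x y = (y == flip x i)%:R.
Proof. by rewrite entry_matX_of iadjacentE. Qed.

Lemma entry_alpha_mulmx i B x y : entry (alpha R i *m B) x y = entry B (flip x i) y.
Proof.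
rewrite entry_mulmx (bigD1 (flip x i)) //= entry_alpha eqxx mul1r big1 ?addr0 //.
by move=> z /negbTE zx; rewrite entry_alpha zx mul0r.
Qed.

Lemma entry_mulmx_alpha i B x y : entry (B *m alpha R i) x y = entry B x (flip y i).
Proof.
rewrite entry_mulmx (bigD1 (flip y i)) //= entry_alpha flipK eqxx mulr1 big1 ?addr0 //.
by move=> z zy; rewrite entry_alpha eq_sym (inv_eq (flipK i)) (negbTE zy) mulr0.
Qed.

Lemma alphaC i j : alpha R i *m alpha R j = alpha R j *m alpha R i.
Proof. by apply/matX_ext => x y; rewrite !entry_alpha_mulmx !entry_alpha flipC. Qed.

Lemma sum_flip_delta (a : 'I_D -> R) x k :
  \sum_i a i * (flip x k == flip x i)%:R = a k.
Proof.
rewrite (bigD1 k) //= eqxx mulr1 big1 ?addr0 // => i ik.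
by rewrite (inj_eq (@flip_inj D x)) eq_sym (negbTE ik) mulr0.
Qed.

Lemma sum_flip_self (a : 'I_D -> R) x : \sum_i a i * (x == flip x i)%:R = 0.
Proof. by rewrite big1 // => i _; rewrite eq_sym (negbTE (flip_neq x i)) mulr0. Qed.

Lemma adjA_sum_alpha : adjA R D = \sum_i alpha R i.
Proof.
apply/matX_ext => x y; rewrite entry_matX_of entry_sum.
have [[k ->] | not_adj] := altP (adjacentP x y).
  by under eq_bigr do rewrite entry_alpha -[_%:R]mul1r; rewrite sum_flip_delta.
rewrite big1 // => i _; rewrite entry_alpha; case: eqP => // yx.
by case/adjacentP: not_adj; exists i.
Qed.

Lemma alpha_adjAC i : alpha R i *m adjA R D = adjA R D *m alpha R i.
Proof.
by rewrite adjA_sum_alpha mulmx_suml mulmx_sumr; apply: eq_bigr => j _; apply: alphaC.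
Qed.

Lemma A_likeP B :
  reflect (B *m adjA R D = adjA R D *m B /\
           forall x y, x != y -> (forall i, y != flip x i) -> entry B x y = 0)
          (A_like B).
Proof.
apply: (iffP andP) => -[BA supp]; split; first exact/eqP.
- move=> x y xy yx; move/forallP/(_ x)/forallP/(_ y): supp; rewrite xy /=.
  move=> /implyP supp; apply/eqP/supp/negP => /adjacentP[i yi].
  by move: (yx i); rewrite yi eqxx.
- exact/eqP.
- apply/forallP => x; apply/forallP => y; apply/implyP => /andP[xy not_adj].
  by apply/eqP/supp => // i; apply: contraNneq not_adj => ->; apply/adjacentP; exists i.
Qed.

Definition alpha_comb (c0 : R) (c : 'I_D -> R) : M := c0%:M + \sum_i c i *: alpha R i.

Lemma entry_alpha_comb c0 c x y :
  entry (alpha_comb c0 c) x y = c0 *+ (x == y) + \sum_i c i * (y == flip x i)%:R.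
Proof.
rewrite entryD entry_scalar_mx entry_sum.
by congr (_ + _); apply: eq_bigr => i _; rewrite entryZ entry_alpha.
Qed.

Lemma entry_alpha_comb_diag c0 c x : entry (alpha_comb c0 c) x x = c0.
Proof. by rewrite entry_alpha_comb eqxx sum_flip_self addr0. Qed.

Lemma entry_alpha_comb_flip c0 c x k : entry (alpha_comb c0 c) x (flip x k) = c k.
Proof.
by rewrite entry_alpha_comb eq_sym (negbTE (flip_neq x k)) sum_flip_delta add0r.
Qed.

Lemma alpha_comb_A_like c0 c : A_like (alpha_comb c0 c).
Proof.
apply/A_likeP; split.
  rewrite /alpha_comb mulmxDl mulmxDr scalar_mxC mulmx_suml mulmx_sumr; congr (_ + _).
  by apply: eq_bigr => i _; rewrite -scalemxAl -scalemxAr alpha_adjAC.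
move=> x y xy yx; rewrite entry_alpha_comb (negbTE xy) add0r big1 // => i _.
by rewrite (negbTE (yx i)) mulr0.
Qed.

Section SymmetricALike.
Variable B : M.
Hypothesis B_sym : forall x y, entry B x y = entry B y x.
Hypothesis B_comm : B *m adjA R D = adjA R D *m B.
Hypothesis B_supp : forall x y, x != y -> (forall i, y != flip x i) -> entry B x y = 0.
Local Notation b := (entry B).

Lemma entry_commute_adjA x y : \sum_i b x (flip y i) = \sum_i b (flip x i) y.
Proof.
have := congr1 (fun C => entry C x y) B_comm.
rewrite /= adjA_sum_alpha mulmx_sumr mulmx_suml !entry_sum => E.
rewrite -(eq_bigr _ (fun i _ => entry_mulmx_alpha i B x y)) E.
by apply: eq_bigr => i _; rewrite entry_alpha_mulmx.
Qed.

Lemma diag_flip x k : b (flip x k) (flip x k) = b x x.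
Proof.
have lhs0 : \sum_(l | l != k) b x (flip (flip x k) l) = 0.
  apply: big1 => l lk; apply: B_supp => [|m]; last exact: flip2_neq_flip.
  by rewrite eq_sym flip2_neq // eq_sym.
have rhs0 : \sum_(l | l != k) b (flip x l) (flip x k) = 0.
  apply: big1 => l lk; apply: B_supp => [|m]; last by rewrite eq_sym flip2_neq_flip.
  by rewrite (inj_eq (@flip_inj D x)).
have := entry_commute_adjA x (flip x k).
by rewrite (bigD1 k) // [in RHS](bigD1 k) //= lhs0 rhs0 !addr0 flipK => ->.
Qed.

Lemma edge_sum x i j : i != j ->
  b x (flip x i) + b x (flip x j) =
  b (flip x i) (flip (flip x i) j) + b (flip x j) (flip (flip x j) i).
Proof.
move=> ij.
have lhs0 : \sum_(l | (l != i) && (l != j)) b x (flip (flip (flip x i) j) l) = 0.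
  apply: big1 => l /andP[li lj]; apply: B_supp => [|m].
    by apply/eqP => /(congr1 (@parity D)); rewrite !parity_flip; case: parity.
  by rewrite (inv_eq (flipK l)) eq_sym flipC flip2_neq_flip2.
have rhs0 : \sum_(l | (l != i) && (l != j)) b (flip x l) (flip (flip x i) j) = 0.
  apply: big1 => l /andP[li lj]; apply: B_supp => [|m].
    by rewrite eq_sym flip2_neq_flip.
  by rewrite eq_sym flip2_neq_flip2.
have := entry_commute_adjA x (flip (flip x i) j).
have ji : j != i by rewrite eq_sym.
rewrite (bigD1 i) // (bigD1 j) //= lhs0 (bigD1 i) // (bigD1 j) //= rhs0 !addr0.
rewrite flipK [flip (flip (flip x i) j) i]flipC flipK.
by rewrite [X in _ + b (flip x j) X]flipC addrC.
Qed.

Hypothesis two_lreg : GRing.lreg (2%:R : R).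

Lemma edge_flip x k i : b (flip x k) (flip (flip x k) i) = b x (flip x i).
Proof.
have [-> | ki] := eqVneq k i; first by rewrite flipK B_sym.
have E1 := edge_sum x ki.
have E2 := edge_sum (flip x k) ki.
rewrite flipK [flip (flip (flip x k) i) k]flipC flipK [b (flip x k) x]B_sym in E2.
rewrite [b (flip (flip x k) i) _]B_sym [X in _ = _ + b _ X]flipC in E2.
apply/eqP; rewrite -subr_eq0 -(mulrI_eq0 _ two_lreg) mulr_natl mulr2n.
set a := b (flip x k) _ in E1 E2 *; set c := b x (flip x i) in E1 E2 *.
set p := b x (flip x k) in E1 E2; set q := b (flip x i) _ in E1 E2.
have -> : a - c + (a - c) = (p + a - (c + q)) - (p + c - (a + q)) by ring.
by rewrite E1 E2 !subrr.
Qed.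

Lemma entry_row_expand x y :
  b x y = b x x *+ (x == y) + \sum_i b x (flip x i) * (y == flip x i)%:R.
Proof.
have [<- | xy] := eqVneq x y; first by rewrite sum_flip_self addr0.
rewrite add0r; have [k /eqP -> | yx] := pickP (fun k => y == flip x k).
  by rewrite sum_flip_delta.
rewrite B_supp // => [|i]; last by rewrite yx.
by rewrite big1 // => i _; rewrite yx mulr0.
Qed.

Lemma A_like_alpha_combE x : B = alpha_comb (b x x) (fun i => b x (flip x i)).
Proof.
apply/matX_ext => y z; rewrite entry_alpha_comb entry_row_expand.
congr (_ *+ _ + _); first exact: (flip_invariant_const diag_flip).
apply: eq_bigr => i _; congr (_ * _).
exact: (flip_invariant_const (fun y k => edge_flip y k i)).
Qed.

End SymmetricALike.
End CubeMatrices.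

Section CubeFamily.
Variables (R : fieldType) (D : nat).
Local Notation M := (matX R D).

Lemma symmetricmxP (B : M) :
  reflect (forall x y, entry B x y = entry B y x) (B \is symmetricmx).
Proof.
rewrite is_hermitianmxE; apply: (iffP eqP) => [BBt x y | Bsym].
  by rewrite {1}BBt /entry !mxE expr0 mul1r.
by apply/matX_ext => x y; rewrite /entry !mxE expr0 mul1r; apply: Bsym.
Qed.

Lemma alpha_comb_symmetric (c0 : R) (c : 'I_D -> R) :
  alpha_comb c0 c \is symmetricmx.
Proof.
apply/symmetricmxP => x y; rewrite !entry_alpha_comb eq_sym; congr (_ + _).
by apply: eq_bigr => i _; rewrite eq_sym (inv_eq (flipK i)).
Qed.

Lemma sum_cube_family (k : 'I_D.+1 -> R) :
  \sum_(l < D.+1) k l *: (cube_family R D)`_l =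
  alpha_comb (k ord0) (fun i => k (lift ord0 i)).
Proof.
rewrite big_ord_recl -tnth_nth tnth_mktuple /cube_family_fun unlift_none scalemx1.
congr (_ + _); apply: eq_bigr => i _.
by rewrite -tnth_nth tnth_mktuple /cube_family_fun liftK.
Qed.

Lemma free_cube_family : free (cube_family R D).
Proof.
apply/freeP => k; rewrite sum_cube_family => k0 l.
pose x : cube D := [ffun => false].
case: (unliftP ord0 l) => [i -> | ->].
  have := congr1 (fun C => entry C x (flip x i)) k0.
  by rewrite /= entry_alpha_comb_flip entry0.
have := congr1 (fun C => entry C x x) k0.
by rewrite /= entry_alpha_comb_diag entry0.
Qed.

Lemma mem_span_cube_family (B : M) :
  reflect (exists c0 c, B = alpha_comb c0 c) (B \in <<cube_family R D>>%VS).
Proof.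
apply: (iffP idP) => [/coord_span -> | [c0 [c ->]]].
  by rewrite sum_cube_family; do 2!eexists.
rewrite /alpha_comb -scalemx1; apply: memvD.
  apply/memvZ/memv_span/tnthP; exists ord0.
  by rewrite tnth_mktuple /cube_family_fun unlift_none.
apply: memv_suml => i _; apply/memvZ/memv_span/tnthP; exists (lift ord0 i).
by rewrite tnth_mktuple /cube_family_fun liftK.
Qed.

End CubeFamily.

Theorem corollary8p4 (R : realFieldType) (D : nat) (hD : (1 <= D)%N) :
  [/\ free (cube_family R D),
      (forall B : matX R D,
         (B \in <<cube_family R D>>%VS) = (B \is symmetricmx) && A_like B)
    & \dim <<cube_family R D>>%VS = D.+1].
Proof.
have free_family := free_cube_family R D.
split => // [B|]; last by move: free_family; rewrite /free size_tuple => /eqP.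
apply/mem_span_cube_family/andP => [[c0 [c ->]] | [/symmetricmxP B_sym]].
  by rewrite alpha_comb_symmetric alpha_comb_A_like.
case/A_likeP => B_comm B_supp.
have two_lreg : GRing.lreg (2%:R : R) by apply/mulfI; rewrite pnatr_eq0.
pose x : cube D := [ffun => false].
by exists (entry B x x), (fun i => entry B x (flip x i)); apply: A_like_alpha_combE.
Qed.
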